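(* Let $S$ be a subcartesian space, $V\subseteq S$ an open subset, and let $n$ be the maximum of the structural dimensions $n_x$ over $x\in V$. If every nonempty open subset of $S$ contained in $V$ contains a point $x$ with $n_x=n$, then every point of $V$ is structurally regular.
   Context: A differential space (Sikorski) is a set $S$ with a family $C^\infty(S)$ of real functions, $S$ carrying the weakest topology making them continuous, closed under composition with smooth functions on $\mathbb{R}^k$, and such that functions locally agreeing with elements of $C^\infty(S)$ belong to $C^\infty(S)$; subsets inherit differential-space structures. A subcartesian space is a Hausdorff differential space each point of which has an open neighbourhood diffeomorphic to a differential subspace of some $\mathbb{R}^n$. The structural dimension $n_x$ of $S$ at $x$ is the smallest integer $n$ such that some open neighbourhood of $x$ in $S$ is diffeomorphic to a subset of $\mathbb{R}^n$. A point $x$ is structurally regular if there is a neighbourhood $U$ of $x$ with $n_y=n_x$ for all $y\in U$. *)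

From HB Require Import structures.
From mathcomp Require Import all_boot all_order all_algebra.
From mathcomp Require Import all_classical all_reals all_analysis.
From mathcomp Require Import Rstruct Rstruct_topology.
From Stdlib Require List.
Set Implicit Arguments. Unset Strict Implicit. Unset Printing Implicit Defensive.
Import Order.TTheory GRing.Theory Num.Theory.
Import numFieldNormedType.Exports.
Local Open Scope classical_set_scope.
Local Open Scope ring_scope.

Notation RR := Rdefinitions.R.

Fixpoint iD (k : nat) (vs : seq 'rV[RR]_k) (f : 'rV[RR]_k -> RR) : 'rV[RR]_k -> RR :=
  match vs with
  | [::] => f
  | v :: vs' => fun x => @derive RR 'rV[RR]_k RR^o (iD vs' f) x v
  end.

Definition smoothR (k : nat) : set ('rV[RR]_k -> RR) :=
  fun f => forall vs : seq 'rV[RR]_k,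
    continuous (iD vs f) /\ (forall x v, @derivable RR 'rV[RR]_k RR^o (iD vs f) x v).

(** The weakest topology on T making every f in F continuous (open sets). *)
Definition ctop (T : Type) (F : set (T -> RR)) : set (set T) :=
  fun U => forall x, U x -> exists (fs : list (T -> RR)) (e : RR),
    0 < e /\ (forall f, List.In f fs -> F f) /\
    (forall y, (forall f, List.In f fs -> `|f y - f x| < e) -> U y).

Definition diff_space (T : Type) (F : set (T -> RR)) : Prop :=
  (forall (k : nat) (fs : 'I_k -> T -> RR) (g : 'rV[RR]_k -> RR),
      (forall i, F (fs i)) -> smoothR g -> F (fun x => g (\row_i fs i x))) /\
  (forall f : T -> RR,
      (forall x, exists U g, ctop F U /\ U x /\ F g /\ (forall y, U y -> f y = g y)) ->
      F f).

Definition sub_struct (T : Type) (F : set (T -> RR)) (A : set T) : set ({x | A x} -> RR) :=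
  fun f => forall a : {x | A x}, exists U g,
    ctop F U /\ U (proj1_sig a) /\ F g /\
    (forall b : {x | A x}, U (proj1_sig b) -> f b = g (proj1_sig b)).

Definition diffeo (T1 T2 : Type) (F1 : set (T1 -> RR)) (F2 : set (T2 -> RR)) : Prop :=
  exists (phi : T1 -> T2) (psi : T2 -> T1),
    cancel phi psi /\ cancel psi phi /\
    (forall f, F2 f -> F1 (f \o phi)) /\ (forall g, F1 g -> F2 (g \o psi)).

Definition hausdorff_ds (T : Type) (F : set (T -> RR)) : Prop :=
  forall x y : T, x <> y -> exists U W, ctop F U /\ ctop F W /\ U x /\ W y /\
    (forall z, ~ (U z /\ W z)).

Definition chart_dim (T : Type) (F : set (T -> RR)) (x : T) (n : nat) : Prop :=
  exists U : set T, ctop F U /\ U x /\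
    exists B : set 'rV[RR]_n, diffeo (@sub_struct T F U) (@sub_struct _ (@smoothR n) B).

Definition subcartesian (T : Type) (F : set (T -> RR)) : Prop :=
  diff_space F /\ hausdorff_ds F /\ (forall x, exists n, chart_dim F x n).

Definition is_sdim (T : Type) (F : set (T -> RR)) (x : T) (n : nat) : Prop :=
  chart_dim F x n /\ (forall m, chart_dim F x m -> (n <= m)%N).

Definition struct_regular (T : Type) (F : set (T -> RR)) (x : T) : Prop :=
  exists U : set T, ctop F U /\ U x /\
    forall y, U y -> forall m, is_sdim F y m <-> is_sdim F x m.

(* Proof idea: the structural dimension is upper semicontinuous, since a chart
   domain of dimension m around x is also a chart domain around each of its
   points.  So near any y in V every point has dimension at most n_y, while by
   density some point of V near y has the maximal dimension n; hence n_y = n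
   throughout V, and V itself witnesses the regularity of each of its points. *)
From mathcomp Require Import all_boot all_order all_algebra.
From mathcomp Require Import all_classical all_reals all_analysis.
From mathcomp Require Import Rstruct Rstruct_topology.
From Stdlib Require List.
Import Order.TTheory GRing.Theory Num.Theory.
Local Open Scope classical_set_scope.
Set Implicit Arguments.

Section StructuralDimension.

Variables (T : Type) (F : set (T -> RR)).

Lemma ctopI (U W : set T) : ctop F U -> ctop F W -> ctop F (U `&` W).
Proof.
move=> oU oW x [Ux Wx].
have [fs1 [e1 [e1_gt0 [F_fs1 sub1]]]] := oU x Ux.
have [fs2 [e2 [e2_gt0 [F_fs2 sub2]]]] := oW x Wx.
exists (fs1 ++ fs2), (Order.min e1 e2); split; first by rewrite lt_min e1_gt0 e2_gt0.
split=> [f /(List.in_app_or fs1 fs2 f) [f_in|f_in]|y near_y];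
  [exact: F_fs1 | exact: F_fs2 |].
split; [apply: sub1 | apply: sub2] => f f_in.
- by have := near_y f (List.in_or_app _ _ _ (or_introl f_in)); rewrite lt_min => /andP[].
- by have := near_y f (List.in_or_app _ _ _ (or_intror f_in)); rewrite lt_min => /andP[].
Qed.

Lemma sdim_uniq (x : T) (a b : nat) : is_sdim F x a -> is_sdim F x b -> a = b.
Proof. by move=> [ha min_a] [hb min_b]; apply: anti_leq; rewrite min_a ?min_b. Qed.

Lemma sdim_exists (x : T) : (exists k, chart_dim F x k) -> exists m, is_sdim F x m.
Proof.
move=> [k hk].
have ex_chart : exists k, `[< chart_dim F x k >] by exists k; apply/asboolP.
exists (ex_minn ex_chart); case: ex_minnP => m /asboolP hm min_m.
by split=> // m' hm'; apply/min_m/asboolP.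
Qed.

Lemma sdim_usc (x : T) (m : nat) : is_sdim F x m ->
  exists U, [/\ ctop F U, U x & forall y k, U y -> is_sdim F y k -> (k <= m)%N].
Proof.
move=> [[U [oU [Ux chartU]]] _]; exists U; split=> // y k Uy [_ min_k].
by apply: min_k; exists U.
Qed.

Lemma struct_regular_sdim_const (U : set T) (n : nat) :
  ctop F U -> (forall y, U y -> is_sdim F y n) -> forall x, U x -> struct_regular F x.
Proof.
move=> oU constU x Ux; exists U; do 2!split=> //; move=> y Uy m.
by split=> h; [rewrite (sdim_uniq h (constU y Uy)) | rewrite (sdim_uniq h (constU x Ux))];
  apply: constU.
Qed.

End StructuralDimension.

Theorem mainTheorem6 (T : Type) (F : set (T -> RR)) (hS : subcartesian F)
  (V : set T) (hV : ctop F V) (n : nat)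
  (hmax_att : exists x0, V x0 /\ is_sdim F x0 n)
  (hmax_ub : forall x m, V x -> is_sdim F x m -> (m <= n)%N)
  (hdense : forall W : set T, ctop F W -> W `<=` V -> (exists y, W y) ->
              exists x, W x /\ is_sdim F x n) :
  forall x, V x -> struct_regular F x.
Proof.
apply: (struct_regular_sdim_const (n := n) hV) => y Vy.
have [m hm] := sdim_exists (proj2 (proj2 hS) y).
have [U [oU Uy le_m]] := sdim_usc hm.
have [z [[Uz Vz] hz]] : exists z, (U `&` V) z /\ is_sdim F z n.
  by apply: hdense; [exact: ctopI | move=> t [] | exists y].
suff -> : n = m by [].
by apply/anti_leq/andP; split; [exact: le_m z n Uz hz | exact: hmax_ub y m Vy hm].
Qed.
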